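(* Let $\mathbb{M}$ be a monster model of $T_{\mathrm{Ham}}$ with underlying set $G_\infty$, and let $I=I_1+(c)+I_2$ be an ordered index set with $I_1,I_2$ infinite. Let $(a_i)_{i\in I}$ be a nonconstant indiscernible sequence from $G$, and let $(b,b')\in G\times v(G)$ be such that $(a_i)_{i\in I_1+I_2}$ is $bb'$-indiscernible. If $v(a_i-b)=b'$ for all $i\neq c$, then $v(a_c-b)=b'$.
   Context: Let $C$ be an ordered field. A Hamel space over $C$ is a $C$-vector space $G$ with two total orderings $<_0,<_1$, each making $G$ an ordered $C$-vector space, and a map $v:G\to G_\infty=G\cup\{\infty\}$ ($G<_0\infty$, $G<_1\infty$) such that for all $x,y\in G$, $\lambda\in C^{\times}$: $v(x)=\infty$ iff $x=0$; $v(x+y)\ge_0\min_0(v(x),v(y))$; $v(\lambda x)=v(x)$; $0<_1x<_1y\Rightarrow v(x)\ge_0v(y)$; $v(v(x))=v(x)$ (with $v(\infty)=\infty$); $v(x)>_10$. It is independent if for all $a_0<_0b_0$, $a_1<_1b_1$ in $G\cup\{\pm\infty\}$ some $z\in G$ has $a_0<_0z<_0b_0$, $a_1<_1z<_1b_1$; dense if for all $a<_0b$ in $G$ some $c$ has $a<_0v(c)<_0b$. $T_{\mathrm{Ham}}$ is the complete theory in the language $\{0,+,(\lambda_c)_{c\in C},<_0,<_1,v,\infty\}$ on universe $G_\infty$ (with $\infty$ absorbing for $+$, $\lambda_c$, $v$) whose models are exactly the independent dense Hamel spaces over $C$. Indiscernible means $\emptyset$-indiscernible; $bb'$-indiscernible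 means indiscernible over $\{b,b'\}$. *)

From HB Require Import structures.
From mathcomp Require Import all_boot all_order all_algebra.
Set Implicit Arguments. Unset Strict Implicit. Unset Printing Implicit Defensive.
Import Order.TTheory GRing.Theory Num.Theory.
Local Open Scope ring_scope.

Section Hamel.
Variables (C : realFieldType) (G : lmodType C).

(* G_infty = option G, with None = infinity (the top element for both orders). *)

Definition ext_lt (lt : rel G) (x y : option G) : bool :=
  match x, y with
  | Some x, Some y => lt x y
  | Some _, None => true
  | None, _ => false
  end.
Definition ext_le (lt : rel G) (x y : option G) : bool := (x == y) || ext_lt lt x y.

Definition ordered_vspace (lt : rel G) : Prop :=
  [/\ forall x, ~~ lt x x,
      forall x y z, lt x y -> lt y z -> lt x z,
      forall x y, x != y -> lt x y || lt y x,
      forall x y z, lt x y -> lt (x + z) (y + z)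
    & forall (l : C) x, 0 < l -> lt 0 x -> lt 0 (l *: x)].

Variables (lt0 lt1 : rel G) (v : G -> option G).

Definition vinf (x : option G) : option G :=
  match x with Some g => v g | None => None end.

Definition hamel_space : Prop :=
  ordered_vspace lt0 /\ ordered_vspace lt1 /\
  (forall x, v x = None <-> x = 0) /\
  (forall x y, ext_le lt0 (v x) (v (x + y)) || ext_le lt0 (v y) (v (x + y))) /\
  (forall (l : C) x, l != 0 -> v (l *: x) = v x) /\
  (forall x y, lt1 0 x -> lt1 x y -> ext_le lt0 (v y) (v x)) /\
  (forall x, vinf (v x) = v x) /\
  (forall x, ext_lt lt1 (Some 0) (v x)).

(* bounds in G U {-oo,+oo}: lower bound None = -oo, upper bound None = +oo *)
Definition bnd_lt (lt : rel G) (lo hi : option G) : bool :=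
  match lo, hi with Some a, Some b => lt a b | _, _ => true end.
Definition above (lt : rel G) (lo : option G) (z : G) : bool :=
  match lo with Some a => lt a z | None => true end.
Definition below (lt : rel G) (hi : option G) (z : G) : bool :=
  match hi with Some b => lt z b | None => true end.

Definition independent : Prop :=
  forall a0 b0 a1 b1 : option G,
    bnd_lt lt0 a0 b0 -> bnd_lt lt1 a1 b1 ->
    exists z : G, [&& above lt0 a0 z, below lt0 b0 z, above lt1 a1 z & below lt1 b1 z].

Definition dense : Prop :=
  forall a b : G, lt0 a b ->
    exists c : G, ext_lt lt0 (Some a) (v c) && ext_lt lt0 (v c) (Some b).

Definition ham_model : Prop := [/\ hamel_space, independent & dense].

Inductive term (P : Type) : Type :=
  | TVar of nat
  | TPar of P
  | TZero
  | TInf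
  | TAdd of term P & term P
  | TScal of C & term P
  | TVal of term P.

Inductive formula (P : Type) : Type :=
  | FEq of term P & term P
  | FLt0 of term P & term P
  | FLt1 of term P & term P
  | FNot of formula P
  | FAnd of formula P & formula P
  | FExists of nat & formula P.

Definition add_inf (x y : option G) : option G :=
  match x, y with Some x, Some y => Some (x + y) | _, _ => None end.
Definition scal_inf (l : C) (x : option G) : option G :=
  match x with Some x => Some (l *: x) | None => None end.

Fixpoint eval_term P (env : nat -> option G) (pv : P -> option G) (t : term P)
  : option G :=
  match t with
  | TVar n => env n
  | TPar p => pv p
  | TZero => Some 0
  | TInf => None
  | TAdd t1 t2 => add_inf (eval_term env pv t1) (eval_term env pv t2)
  | TScal l t1 => scal_inf l (eval_term env pv t1)
  | TVal t1 => vinf (eval_term env pv t1)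
  end.

Fixpoint sat P (env : nat -> option G) (pv : P -> option G) (f : formula P)
  : Prop :=
  match f with
  | FEq t1 t2 => eval_term env pv t1 = eval_term env pv t2
  | FLt0 t1 t2 => ext_lt lt0 (eval_term env pv t1) (eval_term env pv t2)
  | FLt1 t1 t2 => ext_lt lt1 (eval_term env pv t1) (eval_term env pv t2)
  | FNot f1 => ~ sat env pv f1
  | FAnd f1 f2 => sat env pv f1 /\ sat env pv f2
  | FExists n f1 =>
      exists x : option G, sat (fun k => if k == n then x else env k) pv f1
  end.

Definition seq_env (d : Order.disp_t) (I : orderType d) (a : I -> G) (s : seq I)
  : nat -> option G :=
  fun k => nth None (map (fun i => Some (a i)) s) k.

Definition indiscernible_on (d : Order.disp_t) (I : orderType d) (J : pred I)
  (a : I -> G) (P : Type) (pv : P -> option G) : Prop :=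
  forall (f : formula P) (s t : seq I),
    sorted (fun x y => (x < y)%O) s -> sorted (fun x y => (x < y)%O) t ->
    size s = size t -> all J s -> all J t ->
    (sat (seq_env a s) pv f <-> sat (seq_env a t) pv f).

End Hamel.

(** For [i < c < j], indiscernibility over [b] gives [a_i - b] and [a_j - b]
    the same [<_1]-sign, and indiscernibility of the sequence puts [a_c - b]
    [<_1]-between them (or makes it equal to one of them).  Since [v] is
    antitone for [<_1] on positive elements, and [v (- x) = v x], [v] is
    constant on every interval of constant sign whose endpoints have the same
    value; hence [v (a_c - b) = b']. *)

From HB Require Import structures.
From mathcomp Require Import all_boot all_order all_algebra.
Import Order.TTheory GRing.Theory Num.Theory.
Local Open Scope ring_scope.
Set Implicit Arguments. Unset Strict Implicit. Unset Printing Implicit Defensive.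

Section OrderedVectorSpace.
Variables (C : realFieldType) (G : lmodType C) (lt : rel G).
Hypothesis ovsG : ordered_vspace lt.

Lemma ovs_ltxx x : ~~ lt x x.
Proof. by case: ovsG. Qed.

Lemma ovs_lt_trans x y z : lt x y -> lt y z -> lt x z.
Proof. by case: ovsG => _ + _ _ _; apply. Qed.

Lemma ovs_lt_total x y : x != y -> lt x y || lt y x.
Proof. by case: ovsG => _ _ + _ _; apply. Qed.

Lemma ovs_lt_asym x y : lt x y -> ~~ lt y x.
Proof.
by move=> lt_xy; apply/negP => /(ovs_lt_trans lt_xy); apply/negP/ovs_ltxx.
Qed.

Lemma ovs_ltrD2r z x y : lt (x + z) (y + z) = lt x y.
Proof.
case: ovsG => _ _ _ ltD _; apply/idP/idP; last exact: ltD.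
by move=> /(ltD _ _ (- z)); rewrite !addrK.
Qed.

Lemma ovs_ltrN2 x y : lt (- x) (- y) = lt y x.
Proof. by rewrite -(ovs_ltrD2r (x + y)) addrA addNr add0r addrCA addNr addr0. Qed.

Lemma ovs_between_or_eq x y z : (lt x z <-> lt z y) ->
  [\/ z = x, z = y, lt x z && lt z y | lt y z && lt z x].
Proof.
move=> [xz_zy zy_xz].
have [-> | zNx] := eqVneq z x; first by constructor 1.
have [-> | zNy] := eqVneq z y; first by constructor 2.
case/orP: (ovs_lt_total zNx) => [lt_zx | lt_xz]; last first.
  by constructor 3; rewrite lt_xz xz_zy.
have zy_false : ~~ lt z y by apply: contraL lt_zx => /zy_xz /ovs_lt_asym.
case/orP: (ovs_lt_total zNy) => [lt_zy | lt_yz]; first by rewrite lt_zy in zy_false.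
by constructor 4; rewrite lt_yz lt_zx.
Qed.

Lemma ext_ltxx x : ~~ ext_lt lt x x.
Proof. by case: x => //= x; apply: ovs_ltxx. Qed.

Lemma ext_lt_trans x y z : ext_lt lt x y -> ext_lt lt y z -> ext_lt lt x z.
Proof. by case: x y z => [x|] [y|] [z|] //=; apply: ovs_lt_trans. Qed.

Lemma ext_le_anti x y : ext_le lt x y -> ext_le lt y x -> x = y.
Proof.
case/orP=> [/eqP // | lt_xy]; case/orP=> [/eqP // | lt_yx].
by have := ext_ltxx x; rewrite (ext_lt_trans lt_xy lt_yx).
Qed.

End OrderedVectorSpace.

Section Valuation.
Variables (C : realFieldType) (G : lmodType C) (lt0 lt1 : rel G) (v : G -> option G).
Hypothesis hamG : hamel_space lt0 lt1 v.

Lemma hamel_ovs0 : ordered_vspace lt0. Proof. by case: hamG. Qed.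
Lemma hamel_ovs1 : ordered_vspace lt1. Proof. by case: hamG => _ []. Qed.

Lemma v0 : v 0 = None.
Proof. by case: hamG => _ [_ [/(_ 0) [_ zero_inf] _]]; apply: zero_inf. Qed.

Lemma vNone_eq0 x : v x = None -> x = 0.
Proof. by case: hamG => _ [_ [/(_ x) [vx0 _] _]]. Qed.

Lemma vN x : v (- x) = v x.
Proof.
case: hamG => _ [_ [_ [_ [vZ _]]]].
by rewrite -scaleN1r vZ // oppr_eq0 oner_eq0.
Qed.

Lemma v_antitone x y : lt1 0 x -> lt1 x y -> ext_le lt0 (v y) (v x).
Proof. by case: hamG => _ [_ [_ [_ [_ [+ _]]]]]; apply. Qed.

Lemma v_between_pos x y z :
  lt1 0 x -> lt1 x z -> lt1 z y -> v x = v y -> v z = v x.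
Proof.
move=> x_gt0 lt_xz lt_zy vxy.
apply: (ext_le_anti hamel_ovs0 (v_antitone x_gt0 lt_xz)); rewrite vxy.
exact: v_antitone (ovs_lt_trans hamel_ovs1 x_gt0 lt_xz) lt_zy.
Qed.

Lemma v_between x y z :
  lt1 x z -> lt1 z y -> v x = v y -> lt1 0 x = lt1 0 y -> v z = v x.
Proof.
move=> lt_xz lt_zy vxy sign_xy.
have [x_gt0 | x_ngt0] := boolP (lt1 0 x); first exact: v_between_pos lt_zy vxy.
have y_neq0 : y != 0.
  apply/eqP => y0; move: vxy lt_zy; rewrite y0 v0 => /vNone_eq0 x0.
  rewrite -x0 => /(ovs_lt_trans hamel_ovs1 lt_xz).
  by apply/negP/(ovs_ltxx hamel_ovs1).
have y_lt0 : lt1 y 0.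
  by move: (ovs_lt_total hamel_ovs1 y_neq0); rewrite -sign_xy (negbTE x_ngt0) orbF.
rewrite -vN vxy -(vN y); apply: (v_between_pos (y := - x)); last by rewrite !vN.
all: by rewrite ?(ovs_ltrN2 hamel_ovs1) // -oppr0 (ovs_ltrN2 hamel_ovs1).
Qed.

Lemma v_eq_between x y z :
  (lt1 x z <-> lt1 z y) -> v x = v y -> lt1 0 x = lt1 0 y -> v z = v x.
Proof.
move=> /(ovs_between_or_eq hamel_ovs1)
  [-> | -> | /andP[lt_xz lt_zy] | /andP[lt_yz lt_zx]] vxy sign_xy //.
- exact: v_between lt_xz lt_zy vxy sign_xy.
- by rewrite vxy; apply: v_between lt_yz lt_zx (esym vxy) (esym sign_xy).
Qed.

End Valuation.

Section Indiscernibility.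
Variables (C : realFieldType) (G : lmodType C) (lt0 lt1 : rel G) (v : G -> option G).
Variables (d : Order.disp_t) (I : orderType d) (J : pred I) (a : I -> G).
Variables (P : Type) (pv : P -> option G).
Hypothesis indisc : indiscernible_on lt0 lt1 v J a pv.

Lemma indiscernible_lt1 i j k l : (i < j)%O -> (k < l)%O ->
  J i -> J j -> J k -> J l -> lt1 (a i) (a j) <-> lt1 (a k) (a l).
Proof.
move=> lt_ij lt_kl Ji Jj Jk Jl.
by apply: (indisc (FLt1 (TVar _ _ 0) (TVar _ _ 1)) (s := [:: i; j]) (t := [:: k; l]));
  rewrite /= ?lt_ij ?lt_kl ?Ji ?Jj ?Jk ?Jl.
Qed.

Lemma indiscernible_sign_sub p b i j : pv p = Some b -> J i -> J j ->
  lt1 0 (a i - b) = lt1 0 (a j - b).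
Proof.
move=> pv_b Ji Jj.
have := indisc (FLt1 (TZero _ _) (TAdd (TVar _ _ 0) (TScal (-1) (TPar _ p))))
  (s := [:: i]) (t := [:: j]).
rewrite /= pv_b /= Ji Jj !scaleN1r => /(_ erefl erefl erefl erefl erefl) [ij ji].
by apply/idP/idP.
Qed.

End Indiscernibility.

Theorem lemma5p4 (C : realFieldType) (G : lmodType C)
  (lt0 lt1 : rel G) (v : G -> option G)
  (HM : ham_model lt0 lt1 v)
  (d : Order.disp_t) (I : orderType d) (c : I)
  (HI1 : forall s : seq I, exists i, (i < c)%O /\ i \notin s)
  (HI2 : forall s : seq I, exists i, (c < i)%O /\ i \notin s)
  (a : I -> G)
  (Hnc : exists i j, a i != a j)
  (Hind : indiscernible_on lt0 lt1 v predT a (fun p : void => match p with end))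
  (b : G) (b' : option G) (Hb' : exists x : G, v x = b')
  (Hbind : indiscernible_on lt0 lt1 v (fun i => i != c) a
             (fun p : bool => if p then Some b else b'))
  (Hval : forall i, i != c -> v (a i - b) = b') :
  v (a c - b) = b'.
Proof.
case: HM => hamG _ _.
have [i [lt_ic _]] := HI1 [::]; have [j [lt_cj _]] := HI2 [::].
have iNc : i != c by rewrite lt_eqF.
have jNc : j != c by rewrite gt_eqF.
rewrite -(Hval i iNc); apply: (v_eq_between hamG (y := a j - b)).
- rewrite !(ovs_ltrD2r (hamel_ovs1 hamG)).
  exact: (indiscernible_lt1 Hind lt_ic lt_cj).
- by rewrite !Hval.
- exact: (indiscernible_sign_sub Hbind (p := true)).
Qed.
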